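(* Let $f$ be a harmonic function on $K$ whose restriction to the edge $[p_1,p_2]\cong[0,1]$ is strictly monotone. Then the derivative of this restriction at $t=\frac12$ exists in the extended sense and equals $+\infty$ if the restriction is increasing and $-\infty$ if it is decreasing.
   Context: Let $p_0,p_1,p_2$ be the vertices of a unit equilateral triangle in $\mathbb{R}^2$, $F_i(x)=(x+p_i)/2$, and $K$ the Sierpinski gasket (the attractor of $F_0,F_1,F_2$). Minimal triangles of the graph $G_m$ are the triangles with vertices $F_w(p_0),F_w(p_1),F_w(p_2)$ for words $w$ of length $m$. A continuous $f:K\to\mathbb{R}$ is harmonic if for every $m\ge0$ and every minimal triangle of $G_m$ with vertices $v_i,v_j,v_k$, the value at the midpoint $v_{ij}$ of $[v_i,v_j]$ is $\frac15(2f(v_i)+2f(v_j)+f(v_k))$. The edge $[p_1,p_2]$ is identified with $[0,1]$ via $t\mapsto p_1+t(p_2-p_1)$. *)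

From HB Require Import structures.
From mathcomp Require Import all_boot all_order all_algebra.
From mathcomp Require Import all_classical all_reals all_analysis.
Set Implicit Arguments. Unset Strict Implicit. Unset Printing Implicit Defensive.
Import Order.TTheory GRing.Theory Num.Theory.
Import numFieldNormedType.Exports.
Local Open Scope ring_scope.
Local Open Scope classical_set_scope.

Section Gasket.
Variable R : realType.

Definition p0 : R * R := (1 / 2, Num.sqrt 3 / 2).
Definition p1 : R * R := (0, 0).
Definition p2 : R * R := (1, 0).

Definition vtx (i : 'I_3) : R * R :=
  match val i with 0%N => p0 | 1%N => p1 | _ => p2 end.

Definition Fmap (i : 'I_3) (x : R * R) : R * R :=
  ((x.1 + (vtx i).1) / 2, (x.2 + (vtx i).2) / 2).

Definition Fword (w : seq 'I_3) (x : R * R) : R * R := foldr Fmap x w.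

Definition midpt (x y : R * R) : R * R := ((x.1 + y.1) / 2, (x.2 + y.2) / 2).

Definition sg_attractor (K : set (R * R)) : Prop :=
  [/\ compact K, K !=set0 & K = \bigcup_(i in [set: 'I_3]) (Fmap i @` K)].

Definition sg_harmonic (K : set (R * R)) (f : R * R -> R) : Prop :=
  {within K, continuous f} /\
  forall (w : seq 'I_3) (i j k : 'I_3), i != j -> j != k -> i != k ->
    f (midpt (Fword w (vtx i)) (Fword w (vtx j))) =
    (2 * f (Fword w (vtx i)) + 2 * f (Fword w (vtx j)) + f (Fword w (vtx k))) / 5.

Definition edge12 (t : R) : R * R :=
  (p1.1 + t * (p2.1 - p1.1), p1.2 + t * (p2.2 - p1.2)).

End Gasket.

From HB Require Import structures.
From mathcomp Require Import all_boot all_order all_algebra.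
From mathcomp Require Import all_classical all_reals all_analysis.
From mathcomp Require Import ring lra.
Import Order.TTheory GRing.Theory Num.Theory.
Import numFieldNormedType.Exports.
Local Open Scope ring_scope.
Local Open Scope classical_set_scope.

(* Let m be the value of f at the midpoint of the edge [p1, p2].  Since F_1
   fixes p1, the cells F_2 F_1^n all have this midpoint as a corner; the gaps
   between m and the values of f at their two other corners evolve, by the
   midpoint rule, under the matrix (1/5)[[2, 1], [1, 2]] with eigenvalues 3/5
   and 1/5.  The 3/5-mode has coefficient 3 (f p2 - f p1) / 5, which is nonzero,
   so at the edge corner 1/2 + 2^-(n+1) the gap is of order (3/5)^n and the
   dyadic difference quotients grow like (6/5)^n; the cells F_1 F_2^n give the
   same on the left.  Monotonicity along the edge interpolates between dyadic
   points. *)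

Section DyadicQuotient.
Variable R : realType.

Lemma exists_crossing (u : nat -> R) (x : R) (N k : nat) :
  x <= u N -> u (N + k)%N < x -> exists2 n, (N <= n)%N & u n.+1 < x <= u n.
Proof.
move=> xuN; elim: k => [|k IH].
  by rewrite addn0 => /lt_le_trans/(_ xuN); rewrite ltxx.
rewrite addnS => ltx; case: (ltP (u (N + k)%N) x) => [/IH//|xu].
by exists (N + k)%N; [exact: leq_addr | rewrite ltx xu].
Qed.

Lemma dyadic_bracket {x : R} {N : nat} : 0 < x -> x <= 2^-N ->
  exists2 n, (N <= n)%N & 2^-n.+1 < x <= 2^-n.
Proof.
move=> x0 xN.
have : (2^-1 : R) ^+ n @[n --> \oo] --> 0.
  by apply: cvg_expr; rewrite ger0_norm ?invr_ge0 // invf_lt1 // ltr1n.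
move=> /cvgr_lt/(_ _ x0) [m _ /(_ (N + m)%N (leq_addl _ _))/=].
rewrite exprVn => ltx.
exact: (@exists_crossing (fun n => 2^-n) _ _ _ xN ltx).
Qed.

Lemma dyadic_right_quotient_cvgy (g : R -> R) (c r : R) : 0 < r ->
  (forall s t, c <= s -> s <= t -> t <= c + r -> g s <= g t) ->
  (fun n => 2 ^+ n.+1 * (g (c + 2^-n.+1) - g c)) @ \oo --> +oo ->
  (fun h => h^-1 * (g (c + h) - g c)) @ 0^'+ --> +oo.
Proof.
move=> r0 gmono /cvgryPge dyad; apply/cvgryPge => A.
have [N _ HN] := dyad (2 * A).
rewrite near_withinE; apply/nbhs_ballP; exists (Num.min r (2^-N)) => /=.
  by rewrite lt_min r0 invr_gt0 exprn_gt0.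
move=> h; rewrite /ball /= sub0r normrN => + h0.
rewrite gtr0_norm // lt_min => /andP[hr hN].
have [n Nn /andP[hlo hhi]] := dyadic_bracket h0 (ltW hN).
have e0 : 0 < 2^-n.+1 :> R by rewrite invr_gt0 exprn_gt0.
have d0 : 0 <= g (c + 2^-n.+1) - g c by rewrite subr_ge0 gmono //; lra.
have dD : g (c + 2^-n.+1) <= g (c + h) by rewrite gmono //; lra.
have hinv : 2 ^+ n <= h^-1.
  by rewrite -[2 ^+ n]invrK lef_pV2 // posrE ?invr_gt0 exprn_gt0.
(* On the shell 2^-(n+1) < h <= 2^-n, h^-1 >= 2^n and the increment is at
   least the one at 2^-(n+1). *)
have := HN n Nn; set d := g _ - g c; rewrite exprS -mulrA ler_pM2l //.
move=> /le_trans; apply; apply: le_trans (ler_wpM2r d0 hinv) _.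
by apply: ler_wpM2l; rewrite ?invr_ge0 ?(ltW h0) // lerD2r.
Qed.

Lemma cvgry_at_right_left (f : R -> R) (p : R) :
  f x @[x --> p^'+] --> +oo -> f x @[x --> p^'-] --> +oo ->
  f x @[x --> p^'] --> +oo.
Proof.
move=> /cvgryPge fr /cvgryPge fl; apply/cvgryPge => A.
move: (fr A) (fl A); rewrite !near_withinE => frA flA.
apply: filterS2 frA flA => x frx flx; rewrite neq_lt => /orP[/flx|/frx] //.
Qed.

Lemma dyadic_quotient_cvgy (g : R -> R) (c r : R) : 0 < r ->
  (forall s t, c - r <= s -> s <= t -> t <= c + r -> g s <= g t) ->
  (fun n => 2 ^+ n.+1 * (g (c + 2^-n.+1) - g c)) @ \oo --> +oo ->
  (fun n => 2 ^+ n.+1 * (g c - g (c - 2^-n.+1))) @ \oo --> +oo ->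
  (fun h => h^-1 * (g (c + h) - g c)) @ 0^' --> +oo.
Proof.
move=> r0 gmono right left; apply: cvgry_at_right_left.
  apply: dyadic_right_quotient_cvgy r0 _ right => s t cs st tr.
  by apply: gmono => //; lra.
have -> : 0^'- = -%R @ (0 : R)^'+ :> set_system R by rewrite -at_leftN oppr0.
rewrite -fmap_comp.
(* The right quotients of g' at c are the left quotients of g. *)
pose g' t := - g (c - (t - c)).
have g'E h : g' (c + h) = - g (c - h) by rewrite /g' addrAC subrr add0r.
have -> : (fun h => h^-1 * (g (c + h) - g c)) \o -%R =
          (fun h => h^-1 * (g' (c + h) - g' c)).
  by apply/funext => h /=; rewrite g'E /g' subrr subr0 invrN; ring.
apply: dyadic_right_quotient_cvgy r0 _ _.
  move=> s t cs st tr; rewrite /g' lerN2; apply: gmono; lra.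
by under eq_fun do rewrite g'E /g' subrr subr0 opprK addrC.
Qed.
End DyadicQuotient.

Section Recurrences.
Variable R : realType.

Lemma expr_cvgy {a : R} : 1 < a -> a ^+ n @[n --> \oo] --> +oo.
Proof.
move=> a1; have a0 : 0 < a by apply: lt_trans a1.
have -> : (fun n => a ^+ n) = (fun n : nat => (a^-1 ^+ n)^-1).
  by apply/funext => n; rewrite exprVn invrK.
apply/(cvgrVy (f := fun n : nat => a^-1 ^+ n)).
  by near=> n; rewrite exprn_gt0 // invr_gt0.
by apply: cvg_expr; rewrite gtr0_norm ?invr_gt0 // invf_lt1.
Unshelve. all: end_near.
Qed.

Lemma geometric_dominant_cvgy (a b S D : R) : 1 < a -> 0 <= b <= 1 -> 0 < S ->
  a ^+ n * S - b ^+ n * D @[n --> \oo] --> +oo.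
Proof.
move=> a1 /andP[b0 b1] S0; apply/cvgryPge => A.
have /cvgryPge/(_ ((A + `|D|) / S)) := expr_cvgy a1.
apply: filterS => n; rewrite ler_pdivrMr // => an.
have bn0 : 0 <= b ^+ n by exact: exprn_ge0.
have bn1 : b ^+ n <= 1 by exact: exprn_ile1.
have := ler_norm D; have := ler_norm (- D); rewrite normrN.
nra.
Qed.

Lemma averaging_recurrence (U V : nat -> R) :
  (forall n, U n.+1 = (2 * U n + V n) / 5) ->
  (forall n, V n.+1 = (2 * V n + U n) / 5) ->
  forall n,
  2 * V n = (3/5) ^+ n * (U 0%N + V 0%N) - (1/5) ^+ n * (U 0%N - V 0%N).
Proof.
move=> hU hV n.
have [sum diff] : U n + V n = (3/5) ^+ n * (U 0%N + V 0%N) /\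
                  U n - V n = (1/5) ^+ n * (U 0%N - V 0%N).
  elim: n => [|n [IHs IHd]]; first by rewrite !expr0 !mul1r.
  by rewrite hU hV !exprS -!mulrA -IHs -IHd; split; field.
by rewrite -sum -diff; ring.
Qed.
End Recurrences.

Section Gasket.
Variable R : realType.
Implicit Types (w : seq 'I_3) (x y : R * R).

Definition i0 : 'I_3 := Ordinal (isT : (0 < 3)%N).
Definition i1 : 'I_3 := Ordinal (isT : (1 < 3)%N).
Definition i2 : 'I_3 := Ordinal (isT : (2 < 3)%N).

Lemma midptxx x : midpt x x = x.
Proof. by case: x => a b; rewrite /midpt /=; congr pair; field. Qed.

Lemma FmapE i x : Fmap i x = midpt x (vtx R i).
Proof. by []. Qed.

Lemma Fmap_vtx i : Fmap i (vtx R i) = vtx R i.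
Proof. by rewrite FmapE midptxx. Qed.

Lemma Fmap_midpt i x y : Fmap i (midpt x y) = midpt (Fmap i x) (Fmap i y).
Proof. by rewrite /Fmap /midpt /=; congr pair; field. Qed.

Lemma Fword_midpt w x y : Fword w (midpt x y) = midpt (Fword w x) (Fword w y).
Proof. by elim: w => //= i w ->; rewrite Fmap_midpt. Qed.

Lemma Fword_cat w w' x : Fword (w ++ w') x = Fword w (Fword w' x).
Proof. exact: foldr_cat. Qed.

Lemma Fword_nseqSr n i x : Fword (nseq n.+1 i) x = Fword (nseq n i) (Fmap i x).
Proof. by elim: n => //= n <-. Qed.

Lemma Fword_nseq_vtx n i : Fword (nseq n i) (vtx R i) = vtx R i.
Proof. by elim: n => //= n ->; rewrite Fmap_vtx. Qed.

Definition midpoint_rule (f : R * R -> R) : Prop :=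
  forall (w : seq 'I_3) (i j k : 'I_3), i != j -> j != k -> i != k ->
    f (midpt (Fword w (vtx R i)) (Fword w (vtx R j))) =
    (2 * f (Fword w (vtx R i)) + 2 * f (Fword w (vtx R j))
     + f (Fword w (vtx R k))) / 5.

Lemma midpoint_ruleN {f : R * R -> R} :
  midpoint_rule f -> midpoint_rule (fun x => - f x).
Proof. by move=> Hf w i j k ij jk ik; rewrite (Hf w i j k) //; field. Qed.

Section Corner.
Variables (f : R * R -> R) (w : seq 'I_3) (j : 'I_3).
Hypothesis Hf : midpoint_rule f.

Lemma corner_gap_recursion (i k : 'I_3) n : i != j -> j != k -> i != k ->
  f (Fword (w ++ nseq n.+1 j) (vtx R i)) - f (Fword w (vtx R j)) =
  (2 * (f (Fword (w ++ nseq n j) (vtx R i)) - f (Fword w (vtx R j)))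
   + (f (Fword (w ++ nseq n j) (vtx R k)) - f (Fword w (vtx R j)))) / 5.
Proof.
move=> ij jk ik.
(* F_j fixes p_j, so all the cells w j^n share the corner F_w p_j. *)
have corner : Fword (w ++ nseq n j) (vtx R j) = Fword w (vtx R j).
  by rewrite Fword_cat Fword_nseq_vtx.
rewrite Fword_cat Fword_nseqSr -Fword_cat FmapE Fword_midpt (Hf _ _ _ k) //.
by rewrite corner; field.
Qed.

Lemma corner_gap_closed (i k : 'I_3) n : i != j -> j != k -> i != k ->
  2 * (f (Fword (w ++ nseq n j) (vtx R k)) - f (Fword w (vtx R j))) =
  (3/5) ^+ n * (f (Fword w (vtx R i)) + f (Fword w (vtx R k))
                - 2 * f (Fword w (vtx R j)))
  - (1/5) ^+ n * (f (Fword w (vtx R i)) - f (Fword w (vtx R k))).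
Proof.
move=> ij jk ik.
pose gap l m := f (Fword (w ++ nseq m j) (vtx R l)) - f (Fword w (vtx R j)).
have ki : k != i by rewrite eq_sym.
have kj : k != j by rewrite eq_sym.
have ji : j != i by rewrite eq_sym.
have := @averaging_recurrence R (gap i) (gap k)
  (fun m => corner_gap_recursion i k m ij jk ik)
  (fun m => corner_gap_recursion k i m kj ji ki) n.
by rewrite /gap !cats0 => ->; congr (_ - _); ring.
Qed.

Lemma corner_gap_cvgy (i k : 'I_3) : i != j -> j != k -> i != k ->
  0 < f (Fword w (vtx R i)) + f (Fword w (vtx R k))
      - 2 * f (Fword w (vtx R j)) ->
  2 ^+ n.+1 * (f (Fword (w ++ nseq n j) (vtx R k)) - f (Fword w (vtx R j)))
    @[n --> \oo] --> +oo.
Proof.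
move=> ij jk ik S0.
under eq_fun do
  rewrite exprSr -mulrA (corner_gap_closed i) // mulrBr !mulrA -!exprMn.
by apply: geometric_dominant_cvgy S0; lra.
Qed.
End Corner.

Lemma cell_corner_gap_cvgy {f : R * R -> R} (i j k : 'I_3) :
  midpoint_rule f -> i != j -> j != k -> i != k -> f (vtx R j) < f (vtx R k) ->
  2 ^+ n.+1 * (f (Fword ([:: k] ++ nseq n j) (vtx R k))
               - f (Fword [:: k] (vtx R j)))
    @[n --> \oo] --> +oo.
Proof.
move=> Hf ij jk ik fjk; apply: (corner_gap_cvgy _ _ _ Hf i) => //.
have ji : j != i by rewrite eq_sym.
have ki : k != i by rewrite eq_sym.
have kj : k != j by rewrite eq_sym.
rewrite /= Fmap_vtx !FmapE.
have := Hf [::] i k j ik kj ij; have := Hf [::] j k i jk ki ji.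
rewrite /= => -> ->.
lra.
Qed.

Lemma vtx_i1 : vtx R i1 = p1 R. Proof. by []. Qed.
Lemma vtx_i2 : vtx R i2 = p2 R. Proof. by []. Qed.

Lemma edge12_0 : edge12 0 = vtx R i1.
Proof. by rewrite vtx_i1 /edge12 /=; congr pair; ring. Qed.

Lemma edge12_1 : edge12 1 = vtx R i2.
Proof. by rewrite vtx_i2 /edge12 /=; congr pair; ring. Qed.

Lemma Fword_edge_mid_right : Fword [:: i2] (vtx R i1) = edge12 (1/2).
Proof.
by rewrite /= FmapE vtx_i1 vtx_i2 /midpt /edge12 /=; congr pair; field.
Qed.

Lemma Fword_edge_mid_left : Fword [:: i1] (vtx R i2) = edge12 (1/2).
Proof.
by rewrite /= FmapE vtx_i1 vtx_i2 /midpt /edge12 /=; congr pair; field.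
Qed.

Lemma Fword_edge_right n :
  Fword ([:: i2] ++ nseq n i1) (vtx R i2) = edge12 (1/2 + 2^-n.+1).
Proof.
rewrite Fword_cat.
have -> : Fword (nseq n i1) (vtx R i2) = (2^-n, 0).
  elim: n => [|n /= ->]; first by rewrite /= expr0 invr1.
  by rewrite FmapE vtx_i1 /midpt /= exprSr invfM !addr0 mul0r.
by rewrite /= FmapE vtx_i2 /midpt /edge12 /= exprSr invfM; congr pair; field.
Qed.

Lemma Fword_edge_left n :
  Fword ([:: i1] ++ nseq n i2) (vtx R i1) = edge12 (1/2 - 2^-n.+1).
Proof.
rewrite Fword_cat.
have -> : Fword (nseq n i2) (vtx R i1) = (1 - 2^-n, 0).
  elim: n => [|n /= ->]; first by rewrite /= expr0 invr1 subrr.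
  by rewrite FmapE vtx_i2 /midpt /= exprSr invfM; congr pair; field.
by rewrite /= FmapE vtx_i1 /midpt /edge12 /= exprSr invfM; congr pair; field.
Qed.

Lemma increasing_edge_quotient_cvgy (f : R * R -> R) :
  midpoint_rule f ->
  (forall s t : R, 0 <= s -> s < t -> t <= 1 ->
     f (edge12 s) < f (edge12 t)) ->
  (fun h : R => h^-1 * (f (edge12 (1 / 2 + h)) - f (edge12 (1 / 2))))
    @ 0^' --> +oo.
Proof.
move=> Hf finc.
have f12 : f (vtx R i1) < f (vtx R i2).
  by rewrite -edge12_0 -edge12_1; apply: finc; rewrite ?ltr01.
apply: (@dyadic_quotient_cvgy R (fun t => f (edge12 t)) (1/2) (1/2)).
  by lra.
- move=> s t s0; rewrite le_eqVlt => /orP[/eqP-> //|st] t1.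
  by apply/ltW/finc => //; lra.
- have := cell_corner_gap_cvgy i0 i1 i2 Hf isT isT isT f12.
  by under eq_fun do rewrite Fword_edge_right Fword_edge_mid_right.
- have := cell_corner_gap_cvgy i0 i2 i1 (midpoint_ruleN Hf) isT isT isT.
  rewrite ltrN2 => /(_ f12).
  by under eq_fun do rewrite Fword_edge_left Fword_edge_mid_left opprK addrC.
Qed.
End Gasket.

Theorem lemma4 (R : realType) (K : set (R * R)) (f : R * R -> R) :
  sg_attractor K -> sg_harmonic K f ->
  ((forall s t : R, 0 <= s -> s < t -> t <= 1 ->
       f (edge12 s) < f (edge12 t)) ->
     (fun h : R => h^-1 * (f (edge12 (1 / 2 + h)) - f (edge12 (1 / 2))))
       @ 0^' --> +oo) /\
  ((forall s t : R, 0 <= s -> s < t -> t <= 1 ->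
       f (edge12 t) < f (edge12 s)) ->
     (fun h : R => h^-1 * (f (edge12 (1 / 2 + h)) - f (edge12 (1 / 2))))
       @ 0^' --> -oo).
Proof.
move=> _ [_ Hf]; split; first exact: increasing_edge_quotient_cvgy.
move=> fdec; rewrite -cvgNry.
have -> :
    - (fun h : R => h^-1 * (f (edge12 (1 / 2 + h)) - f (edge12 (1 / 2)))) =
    (fun h => h^-1 * (- f (edge12 (1 / 2 + h)) - - f (edge12 (1 / 2)))).
  by apply/funext => h; rewrite opprfctE; ring.
apply: (increasing_edge_quotient_cvgy _ _ (midpoint_ruleN _ Hf)).
by move=> s t s0 st t1; rewrite ltrN2 fdec.
Qed.
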